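(* There is a constant $A=A(\mathcal I)>0$ such that for all $b_0,b\in\Theta$, $$A^2\max\Big\{K(\pi_{b_0},\pi_b),\ E_{b_0}\Big[\Big(\log\frac{\pi_{b_0}(X_0)}{\pi_b(X_0)}\Big)^2\Big]\Big\}\le\|b_0-b\|_2^2.$$
   Context: Known $\sigma\in C^2_{per}([0,1])$ (1-periodic $C^2$) with $0<\sigma_L\le\sigma\le\sigma_U$; known $K_0$, $\Theta=\{f\in C^1_{per}([0,1]):\|f\|_\infty+\|f'\|_\infty\le K_0\}$; $\mathcal I=\{K_0,\sigma_L,\sigma_U\}$. For $b\in\Theta$, with $I_b(x)=\int_0^x2b(y)/\sigma^2(y)dy$, $\pi_b(x)=\frac{e^{I_b(x)}}{H_b\sigma^2(x)}\big(e^{I_b(1)}\int_x^1e^{-I_b(y)}dy+\int_0^xe^{-I_b(y)}dy\big)$, $x\in[0,1]$, with $H_b$ chosen so that $\int_0^1\pi_b=1$ (the invariant density of $X\bmod1$ for the solution $X$ of $dX_t=b(X_t)dt+\sigma(X_t)dW_t$). Under $E_{b_0}$, $X_0$ has density $\pi_{b_0}$. $K(p,q)=\int\log(p/q)\,p$ is the Kullback–Leibler divergence. *)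

From Stdlib Require Import Reals Lra ClassicalEpsilon.
Open Scope R_scope.

(* Total Riemann integral: the value of RiemannInt when f is Riemann
   integrable on [a,b] (independent of the integrability proof), 0 otherwise.
   All integrands used below are continuous, hence integrable. *)
Definition Rint (f : R -> R) (a b : R) : R :=
  epsilon (inhabits 0)
    (fun l => exists pr : Riemann_integrable f a b, RiemannInt pr = l).

(* 1-periodic functions on R (identified with functions on [0,1] with
   periodic boundary behaviour). *)
Definition periodic1 (f : R -> R) : Prop := forall x, f (x + 1) = f x.

Definition C1per (f : R -> R) : Prop :=
  periodic1 f /\
  exists f' : R -> R, (forall x, derivable_pt_lim f x (f' x)) /\ continuity f'.

Definition C2per (f : R -> R) : Prop :=
  periodic1 f /\
  exists f' f'' : R -> R,
    (forall x, derivable_pt_lim f x (f' x)) /\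
    (forall x, derivable_pt_lim f' x (f'' x)) /\ continuity f''.

Definition Theta (K0 : R) (f : R -> R) : Prop :=
  periodic1 f /\
  exists f' : R -> R, (forall x, derivable_pt_lim f x (f' x)) /\ continuity f' /\
    exists M1 M2 : R,
      (forall x, 0 <= x <= 1 -> Rabs (f x) <= M1) /\
      (forall x, 0 <= x <= 1 -> Rabs (f' x) <= M2) /\
      M1 + M2 <= K0.

Definition Ib (sigma b : R -> R) (x : R) : R :=
  Rint (fun y => 2 * b y / (sigma y)^2) 0 x.

(* unnormalised invariant density *)
Definition pi_un (sigma b : R -> R) (x : R) : R :=
  exp (Ib sigma b x) / (sigma x)^2 *
  (exp (Ib sigma b 1) * Rint (fun y => exp (- Ib sigma b y)) x 1
   + Rint (fun y => exp (- Ib sigma b y)) 0 x).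

Definition Hb (sigma b : R -> R) : R := Rint (pi_un sigma b) 0 1.

Definition pib (sigma b : R -> R) (x : R) : R := pi_un sigma b x / Hb sigma b.

Definition KL (p q : R -> R) : R := Rint (fun x => ln (p x / q x) * p x) 0 1.

(* E_{b0}[(log(pi_{b0}(X0)/pi_b(X0)))^2] with X0 ~ pi_{b0} on [0,1] *)
Definition Elog2 (p q : R -> R) : R :=
  Rint (fun x => (ln (p x / q x))^2 * p x) 0 1.

Definition L2sq (f g : R -> R) : R := Rint (fun x => (f x - g x)^2) 0 1.

From Stdlib Require Import Reals Lra ClassicalEpsilon.
From Coquelicot Require Import Coquelicot.
Open Scope R_scope.

(** The density [pib sigma b] is obtained from [b] by finitely many operations (integrating
    [2 b / sigma^2], exponentials, sums, products, integrals in [x], reciprocals of quantities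
    bounded away from 0), each of which preserves boundedness on [0,1] and Lipschitz
    dependence on [b] in the L^2 distance, uniformly over admissible [sigma] and [b];
    Cauchy-Schwarz is needed only for [Ib].  Hence [|pi_b0 - pi_b| <= C ||b0 - b||_2] and
    [pi_b >= m > 0] on [0,1], with [C] and [m] depending only on [K0], [sigmaL], [sigmaU].
    Integrating the pointwise bounds [log(p/q) p <= (p - q) + (p - q)^2 / q] and
    [|log(p/q)| <= |p - q| / m] against [int p = int q = 1] bounds both divergences by a
    constant times [||b0 - b||_2^2]. *)

(* Coquelicot states its continuity and integral lemmas with the generic [plus], [mult],
   [scal] of its algebraic hierarchy; the restatements below use [Rplus], [Rmult], ... so that
   they apply and rewrite on plain real expressions. *)
Lemma continuous_Rplus (f g : R -> R) x :
  continuous f x -> continuous g x -> continuous (fun y => f y + g y) x.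
Proof. exact (continuous_plus f g x). Qed.

Lemma continuous_Ropp (f : R -> R) x : continuous f x -> continuous (fun y => - f y) x.
Proof. exact (continuous_opp f x). Qed.

Lemma continuous_Rminus (f g : R -> R) x :
  continuous f x -> continuous g x -> continuous (fun y => f y - g y) x.
Proof. exact (continuous_minus f g x). Qed.

Lemma continuous_Rmult (f g : R -> R) x :
  continuous f x -> continuous g x -> continuous (fun y => f y * g y) x.
Proof. exact (continuous_mult f g x). Qed.

Lemma continuous_Rsqr (f : R -> R) x : continuous f x -> continuous (fun y => f y ^ 2) x.
Proof.
  intros Hf. apply (continuous_ext (fun y => f y * f y)); [intros; simpl; ring|].
  now apply continuous_Rmult.
Qed.

Lemma continuous_Rabs_comp (f : R -> R) x : continuous f x -> continuous (fun y => Rabs (f y)) x.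
Proof. intros Hf. apply (continuous_comp f Rabs); [exact Hf | apply continuous_Rabs]. Qed.

Lemma continuous_ln_comp (f : R -> R) x :
  continuous f x -> 0 < f x -> continuous (fun y => ln (f y)) x.
Proof. intros Hf Hpos. apply (continuous_comp f ln); [exact Hf | now apply continuous_ln]. Qed.

Lemma continuous_Rdiv (f g : R -> R) x :
  continuous f x -> continuous g x -> g x <> 0 -> continuous (fun y => f y / g y) x.
Proof.
  intros Hf Hg Hg0. apply continuous_Rmult; [exact Hf|].
  now apply continuous_Rinv_comp.
Qed.

Lemma Rint_RInt (f : R -> R) a b : ex_RInt f a b -> Rint f a b = RInt f a b.
Proof.
  intros Hf. unfold Rint.
  destruct (epsilon_spec (inhabits 0)
    (fun l => exists pr : Riemann_integrable f a b, RiemannInt pr = l)) as [pr <-].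
  - exists (RiemannInt (ex_RInt_Reals_0 f a b Hf)). now eexists.
  - symmetry. apply RInt_Reals.
Qed.

Lemma ex_RInt_cont (f : R -> R) a b : (forall x, continuous f x) -> ex_RInt f a b.
Proof. intros Hf. apply (ex_RInt_continuous (V := R_CompleteNormedModule)); auto. Qed.

Lemma Rint_cont (f : R -> R) a b : (forall x, continuous f x) -> Rint f a b = RInt f a b.
Proof. intros Hf. now apply Rint_RInt, ex_RInt_cont. Qed.

Lemma continuous_RInt_0 (f : R -> R) :
  (forall x, continuous f x) -> forall x, continuous (fun t => RInt f 0 t) x.
Proof.
  intros Hf x. apply (ex_derive_continuous (fun t => RInt f 0 t)).
  exists (f x). apply (is_derive_RInt f _ 0 x); [|apply Hf].
  apply filter_forall. intros y. apply (RInt_correct (V := R_CompleteNormedModule)).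
  now apply ex_RInt_cont.
Qed.

Lemma RInt_Rplus (f g : R -> R) a b : ex_RInt f a b -> ex_RInt g a b ->
  RInt (fun x => f x + g x) a b = RInt f a b + RInt g a b.
Proof. exact (RInt_plus f g a b). Qed.

Lemma RInt_Rminus (f g : R -> R) a b : ex_RInt f a b -> ex_RInt g a b ->
  RInt (fun x => f x - g x) a b = RInt f a b - RInt g a b.
Proof. exact (RInt_minus f g a b). Qed.

Lemma RInt_Rmult_l (f : R -> R) a b c : ex_RInt f a b ->
  RInt (fun x => c * f x) a b = c * RInt f a b.
Proof. exact (RInt_scal f a b c). Qed.

Lemma RInt_const_R a b c : RInt (fun _ => c) a b = (b - a) * c.
Proof. exact (RInt_const a b c). Qed.

Lemma RInt_Chasles_R (f : R -> R) a b c : ex_RInt f a b -> ex_RInt f b c ->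
  RInt f a b + RInt f b c = RInt f a c.
Proof. exact (RInt_Chasles f a b c). Qed.

Lemma abs_RInt_0_le (f g : R -> R) x :
  (forall y, continuous f y) -> (forall y, continuous g y) -> 0 <= x <= 1 ->
  (forall y, 0 <= y <= 1 -> Rabs (f y) <= g y) -> Rabs (RInt f 0 x) <= RInt g 0 1.
Proof.
  intros Hf Hg Hx Hfg.
  assert (Hgx : ex_RInt g 0 x) by now apply ex_RInt_cont.
  assert (Hg1 : ex_RInt g x 1) by now apply ex_RInt_cont.
  assert (Htail : 0 <= RInt g x 1).
  { apply RInt_ge_0; [lra | exact Hg1|]. intros y Hy.
    apply Rle_trans with (Rabs (f y)); [apply Rabs_pos | apply Hfg; lra]. }
  rewrite <- (RInt_Chasles_R g 0 x 1 Hgx Hg1).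
  apply Rle_trans with (RInt g 0 x); [|lra].
  apply Rle_trans with (RInt (fun t => Rabs (f t)) 0 x).
  - apply abs_RInt_le; [lra | now apply ex_RInt_cont].
  - apply RInt_le; [lra | apply ex_RInt_cont; intros; now apply continuous_Rabs_comp
      | exact Hgx | intros; apply Hfg; lra].
Qed.

Lemma RInt_abs_le_sqrt_RInt_sq (h : R -> R) :
  (forall y, continuous h y) ->
  RInt (fun x => Rabs (h x)) 0 1 <= sqrt (RInt (fun x => h x ^ 2) 0 1).
Proof.
  intros Hh. set (m := RInt (fun x => Rabs (h x)) 0 1).
  assert (Habs : ex_RInt (fun x => Rabs (h x)) 0 1)
    by (apply ex_RInt_cont; intros; now apply continuous_Rabs_comp).
  assert (Hsq : ex_RInt (fun x => h x ^ 2) 0 1)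
    by (apply ex_RInt_cont; intros; now apply continuous_Rsqr).
  assert (Hm : 0 <= m) by (apply RInt_ge_0; [lra | exact Habs | intros; apply Rabs_pos]).
  (* 0 <= \int (|h| - m)^2 = \int h^2 - m^2 *)
  assert (Hvar : 0 <= RInt (fun x => h x ^ 2 + (- (2 * m) * Rabs (h x) + m ^ 2)) 0 1).
  { apply RInt_ge_0; [lra| |].
    - apply ex_RInt_cont. intros. apply continuous_Rplus; [now apply continuous_Rsqr|].
      apply continuous_Rplus; [|apply continuous_const].
      apply continuous_Rmult; [apply continuous_const | now apply continuous_Rabs_comp].
    - intros x _. rewrite <- (pow2_abs (h x)).
      pose proof (pow2_ge_0 (Rabs (h x) - m)). nra. }
  assert (Hlin : ex_RInt (fun x => - (2 * m) * Rabs (h x)) 0 1)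
    by (apply (ex_RInt_scal (V := R_CompleteNormedModule)); exact Habs).
  rewrite (RInt_Rplus (fun x => h x ^ 2)) in Hvar;
    [|exact Hsq | apply (ex_RInt_plus (V := R_CompleteNormedModule));
                  [exact Hlin | apply ex_RInt_const]].
  rewrite (RInt_Rplus (fun x => - (2 * m) * Rabs (h x))), (RInt_Rmult_l (fun x => Rabs (h x))),
    RInt_const_R in Hvar; [|exact Habs | exact Hlin | apply ex_RInt_const].
  fold m in Hvar. rewrite <- (sqrt_pow2 m Hm). apply sqrt_le_1_alt. nra.
Qed.

Lemma exp_le_compat x y : x <= y -> exp x <= exp y.
Proof. intros [Hlt | ->]; [left; now apply exp_increasing | lra]. Qed.

Lemma exp_lipschitz a0 a B : a0 <= B -> a <= B ->
  Rabs (exp a0 - exp a) <= exp B * Rabs (a0 - a).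
Proof.
  intros H0 H1.
  pose proof (exp_le_compat _ _ H0). pose proof (exp_le_compat _ _ H1).
  (* tangent-line bound exp y >= exp x (1 + y - x), applied at both points *)
  assert (T0 : exp a0 * (1 + (a - a0)) <= exp a).
  { replace (exp a) with (exp a0 * exp (a - a0)) by (rewrite <- exp_plus; f_equal; ring).
    apply Rmult_le_compat_l; [left; apply exp_pos | apply exp_ineq1_le]. }
  assert (T1 : exp a * (1 + (a0 - a)) <= exp a0).
  { replace (exp a0) with (exp a * exp (a0 - a)) by (rewrite <- exp_plus; f_equal; ring).
    apply Rmult_le_compat_l; [left; apply exp_pos | apply exp_ineq1_le]. }
  pose proof (exp_pos a0). pose proof (exp_pos a).
  destruct (Rle_or_lt a a0).
  - rewrite Rabs_right by nra. rewrite (Rabs_right (a0 - a)) by lra. nra.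
  - rewrite Rabs_left1 by nra. rewrite (Rabs_left (a0 - a)) by lra. nra.
Qed.

Lemma ln_div_mul_le p q : 0 < p -> 0 < q -> ln (p / q) * p <= (p - q) + (p - q) ^ 2 / q.
Proof.
  intros Hp Hq.
  assert (Hln : ln (p / q) <= p / q - 1).
  { pose proof (exp_ineq1_le (ln (p / q))).
    rewrite exp_ln in H by (apply Rdiv_lt_0_compat; lra). lra. }
  replace ((p - q) + (p - q) ^ 2 / q) with ((p / q - 1) * p) by (field; lra).
  apply Rmult_le_compat_r; lra.
Qed.
Lemma ln_div_sq_le p q m : 0 < m -> m <= p -> m <= q -> ln (p / q) ^ 2 <= ((p - q) / m) ^ 2.
Proof.
  intros Hm Hp Hq.
  assert (Hup : ln (p / q) <= Rabs (p - q) / m).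
  { apply Rle_trans with ((p - q) / q).
    - pose proof (exp_ineq1_le (ln (p / q))).
      rewrite exp_ln in H by (apply Rdiv_lt_0_compat; lra).
      replace ((p - q) / q) with (p / q - 1) by (field; lra). lra.
    - apply Rle_trans with (Rabs (p - q) / q).
      + apply Rmult_le_compat_r; [left; apply Rinv_0_lt_compat; lra | apply RRle_abs].
      + apply Rmult_le_compat_l; [apply Rabs_pos | apply Rinv_le_contravar; lra]. }
  assert (Hlow : - ln (p / q) <= Rabs (p - q) / m).
  { apply Rle_trans with ((q - p) / p).
    - pose proof (exp_ineq1_le (ln (q / p))).
      rewrite exp_ln in H by (apply Rdiv_lt_0_compat; lra).
      replace (- ln (p / q)) with (ln (q / p))
        by (rewrite !ln_div by lra; ring).
      replace ((q - p) / p) with (q / p - 1) by (field; lra). lra.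
    - rewrite Rabs_minus_sym. apply Rle_trans with (Rabs (q - p) / p).
      + apply Rmult_le_compat_r; [left; apply Rinv_0_lt_compat; lra | apply RRle_abs].
      + apply Rmult_le_compat_l; [apply Rabs_pos | apply Rinv_le_contravar; lra]. }
  replace (((p - q) / m) ^ 2) with ((Rabs (p - q) / m) ^ 2)
    by (unfold Rdiv; rewrite !Rpow_mult_distr, pow2_abs; reflexivity).
  assert (0 <= Rabs (p - q) / m) by (apply Rdiv_le_0_compat; [apply Rabs_pos | lra]).
  nra.
Qed.

Section DivergenceBounds.

Variables (p q : R -> R) (m e : R).
Hypothesis p_cont : forall x, continuous p x.
Hypothesis q_cont : forall x, continuous q x.
Hypothesis m_pos : 0 < m.
Hypothesis p_ge : forall x, 0 <= x <= 1 -> m <= p x.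
Hypothesis q_ge : forall x, 0 <= x <= 1 -> m <= q x.
Hypothesis pq_close : forall x, 0 <= x <= 1 -> Rabs (p x - q x) <= e.

Let log_ratio_cont x : Rmin 0 1 <= x <= Rmax 0 1 -> continuous (fun y => ln (p y / q y)) x.
Proof.
  rewrite Rmin_left, Rmax_right by lra. intros Hx.
  pose proof (p_ge x Hx). pose proof (q_ge x Hx).
  apply continuous_ln_comp; [apply continuous_Rdiv; auto; lra | apply Rdiv_lt_0_compat; lra].
Qed.

Lemma KL_le : Rint p 0 1 = Rint q 0 1 -> KL p q <= e ^ 2 / m.
Proof.
  intros Hmass. unfold KL.
  assert (Hint : ex_RInt (fun x => ln (p x / q x) * p x) 0 1).
  { apply (ex_RInt_continuous (V := R_CompleteNormedModule)). intros x Hx.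
    apply continuous_Rmult; auto. }
  assert (Hp : ex_RInt p 0 1) by now apply ex_RInt_cont.
  assert (Hq : ex_RInt q 0 1) by now apply ex_RInt_cont.
  assert (Hpq : ex_RInt (fun x => p x - q x) 0 1)
    by (apply ex_RInt_cont; intros; now apply continuous_Rminus).
  rewrite (Rint_RInt _ _ _ Hint).
  rewrite !Rint_cont in Hmass by assumption.
  apply Rle_trans with (RInt (fun x => (p x - q x) + e ^ 2 / m) 0 1).
  - apply RInt_le; [lra | exact Hint
      | apply (ex_RInt_plus (V := R_CompleteNormedModule)); [exact Hpq | apply ex_RInt_const]|].
    intros x Hx. assert (Hx' : 0 <= x <= 1) by lra.
    pose proof (p_ge x Hx'). pose proof (q_ge x Hx'). pose proof (pq_close x Hx').
    eapply Rle_trans; [apply ln_div_mul_le; lra|]. apply Rplus_le_compat_l.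
    unfold Rdiv. apply Rmult_le_compat; [apply pow2_ge_0 | left; apply Rinv_0_lt_compat; lra
      | rewrite <- (pow2_abs (p x - q x)); apply pow_incr; split; [apply Rabs_pos | lra]
      | apply Rinv_le_contravar; lra].
  - rewrite (RInt_Rplus (fun x => p x - q x)), (RInt_Rminus p q), RInt_const_R;
      [lra | assumption .. | apply ex_RInt_const].
Qed.

Lemma Elog2_le : Rint p 0 1 = 1 -> Elog2 p q <= (e / m) ^ 2.
Proof.
  intros Hmass. unfold Elog2.
  assert (Hint : ex_RInt (fun x => ln (p x / q x) ^ 2 * p x) 0 1).
  { apply (ex_RInt_continuous (V := R_CompleteNormedModule)). intros x Hx.
    apply continuous_Rmult; [apply continuous_Rsqr|]; auto. }
  assert (Hp : ex_RInt p 0 1) by now apply ex_RInt_cont.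
  rewrite (Rint_RInt _ _ _ Hint). rewrite Rint_cont in Hmass by assumption.
  apply Rle_trans with (RInt (fun x => (e / m) ^ 2 * p x) 0 1).
  - apply RInt_le; [lra | exact Hint
      | apply (ex_RInt_scal (V := R_CompleteNormedModule)); exact Hp|].
    intros x Hx. assert (Hx' : 0 <= x <= 1) by lra.
    pose proof (p_ge x Hx'). pose proof (q_ge x Hx'). pose proof (pq_close x Hx').
    apply Rmult_le_compat_r; [lra|].
    eapply Rle_trans; [apply (ln_div_sq_le _ _ m); lra|].
    unfold Rdiv. rewrite !Rpow_mult_distr. apply Rmult_le_compat_r; [apply pow2_ge_0|].
    rewrite <- (pow2_abs (p x - q x)). apply pow_incr. split; [apply Rabs_pos | lra].
  - rewrite (RInt_Rmult_l p), Hmass by exact Hp. lra.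
Qed.

End DivergenceBounds.

Section BoundedLipschitz.

Context {E P : Type}.
Variables (adm : E -> P -> Prop) (dist : P -> P -> R).
Hypothesis dist_ge0 : forall p0 p, 0 <= dist p0 p.

Definition bounded_lipschitz (F : E -> P -> R -> R) : Prop :=
  exists B C, 0 <= C /\ forall e p0 p, adm e p0 -> adm e p -> forall x, 0 <= x <= 1 ->
    Rabs (F e p x) <= B /\ Rabs (F e p0 x - F e p x) <= C * dist p0 p.

Definition bounded_below (F : E -> P -> R -> R) : Prop :=
  exists m, 0 < m /\ forall e p, adm e p -> forall x, 0 <= x <= 1 -> m <= F e p x.

Lemma bounded_lipschitz_bound F : bounded_lipschitz F ->
  exists B, forall e p, adm e p -> forall x, 0 <= x <= 1 -> Rabs (F e p x) <= B.
Proof. intros [B [C [_ H]]]. exists B. intros e p Hp x Hx. now apply (H e p p). Qed.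

Lemma bounded_lipschitz_ext F G : bounded_lipschitz F ->
  (forall e p, adm e p -> forall x, 0 <= x <= 1 -> G e p x = F e p x) ->
  bounded_lipschitz G.
Proof.
  intros [B [C [HC H]]] HGF. exists B, C. split; [exact HC|].
  intros e p0 p H0 H1 x Hx. rewrite !HGF by assumption. now apply H.
Qed.

Lemma bounded_lipschitz_eval F c : 0 <= c <= 1 -> bounded_lipschitz F ->
  bounded_lipschitz (fun e p _ => F e p c).
Proof.
  intros Hc [B [C [HC H]]]. exists B, C. split; [exact HC|].
  intros e p0 p H0 H1 _ _. now apply H.
Qed.

Lemma bounded_lipschitz_opp F : bounded_lipschitz F ->
  bounded_lipschitz (fun e p x => - F e p x).
Proof.
  intros [B [C [HC H]]]. exists B, C. split; [exact HC|].
  intros e p0 p H0 H1 x Hx. destruct (H e p0 p H0 H1 x Hx) as [HB HL].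
  rewrite Rabs_Ropp. split; [exact HB|].
  replace (- F e p0 x - - F e p x) with (- (F e p0 x - F e p x)) by ring.
  now rewrite Rabs_Ropp.
Qed.

Lemma bounded_lipschitz_add F G : bounded_lipschitz F -> bounded_lipschitz G ->
  bounded_lipschitz (fun e p x => F e p x + G e p x).
Proof.
  intros [B1 [C1 [HC1 H1]]] [B2 [C2 [HC2 H2]]]. exists (B1 + B2), (C1 + C2). split; [lra|].
  intros e p0 p Hp0 Hp x Hx.
  destruct (H1 e p0 p Hp0 Hp x Hx) as [F_B F_L], (H2 e p0 p Hp0 Hp x Hx) as [G_B G_L].
  split.
  - eapply Rle_trans; [apply Rabs_triang | lra].
  - replace (F e p0 x + G e p0 x - (F e p x + G e p x))
      with ((F e p0 x - F e p x) + (G e p0 x - G e p x)) by ring.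
    eapply Rle_trans; [apply Rabs_triang | lra].
Qed.

Lemma bounded_lipschitz_mul F G : bounded_lipschitz F -> bounded_lipschitz G ->
  bounded_lipschitz (fun e p x => F e p x * G e p x).
Proof.
  intros [B1 [C1 [HC1 H1]]] [B2 [C2 [HC2 H2]]].
  exists (Rabs B1 * Rabs B2), (Rabs B1 * C2 + Rabs B2 * C1).
  pose proof (Rabs_pos B1). pose proof (Rabs_pos B2).
  split; [nra|]. intros e p0 p Hp0 Hp x Hx.
  destruct (H1 e p0 p Hp0 Hp x Hx) as [F_B F_L], (H2 e p0 p Hp0 Hp x Hx) as [G_B G_L].
  destruct (H1 e p0 p0 Hp0 Hp0 x Hx) as [F0_B _].
  pose proof (dist_ge0 p0 p).
  assert (Fp0 : Rabs (F e p0 x) <= Rabs B1) by (eapply Rle_trans; [exact F0_B | apply RRle_abs]).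
  assert (Fp : Rabs (F e p x) <= Rabs B1) by (eapply Rle_trans; [exact F_B | apply RRle_abs]).
  assert (Gp : Rabs (G e p x) <= Rabs B2) by (eapply Rle_trans; [exact G_B | apply RRle_abs]).
  split.
  - rewrite Rabs_mult. apply Rmult_le_compat; auto using Rabs_pos.
  - replace (F e p0 x * G e p0 x - F e p x * G e p x)
      with (F e p0 x * (G e p0 x - G e p x) + G e p x * (F e p0 x - F e p x)) by ring.
    eapply Rle_trans; [apply Rabs_triang|]. rewrite !Rabs_mult.
    assert (Rabs (F e p0 x) * Rabs (G e p0 x - G e p x) <= Rabs B1 * (C2 * dist p0 p))
      by (apply Rmult_le_compat; auto using Rabs_pos).
    assert (Rabs (G e p x) * Rabs (F e p0 x - F e p x) <= Rabs B2 * (C1 * dist p0 p))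
      by (apply Rmult_le_compat; auto using Rabs_pos).
    nra.
Qed.

Lemma bounded_lipschitz_exp F : bounded_lipschitz F ->
  bounded_lipschitz (fun e p x => exp (F e p x)).
Proof.
  intros [B [C [HC H]]]. exists (exp B), (exp B * C). pose proof (exp_pos B).
  split; [nra|]. intros e p0 p Hp0 Hp x Hx.
  destruct (H e p0 p Hp0 Hp x Hx) as [F_B F_L], (H e p0 p0 Hp0 Hp0 x Hx) as [F0_B _].
  apply Rabs_le_between in F_B, F0_B. split.
  - rewrite Rabs_right by (left; apply exp_pos). apply exp_le_compat. lra.
  - eapply Rle_trans; [apply (exp_lipschitz _ _ B); lra|].
    rewrite Rmult_assoc. apply Rmult_le_compat_l; lra.
Qed.

Lemma bounded_lipschitz_inv F : bounded_lipschitz F -> bounded_below F ->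
  bounded_lipschitz (fun e p x => / F e p x).
Proof.
  intros [B [C [HC H]]] [m [Hm Hlow]]. exists (/ m), (C / (m * m)).
  assert (Hmm : 0 < / (m * m)) by (apply Rinv_0_lt_compat; nra).
  split; [unfold Rdiv; nra|]. intros e p0 p Hp0 Hp x Hx.
  destruct (H e p0 p Hp0 Hp x Hx) as [_ F_L].
  pose proof (Hlow e p0 Hp0 x Hx). pose proof (Hlow e p Hp x Hx).
  pose proof (dist_ge0 p0 p). split.
  - rewrite Rabs_right by (left; apply Rinv_0_lt_compat; lra).
    apply Rinv_le_contravar; lra.
  - replace (/ F e p0 x - / F e p x)
      with (- (F e p0 x - F e p x) * / (F e p0 x * F e p x)) by (field; lra).
    rewrite Rabs_mult, Rabs_Ropp, (Rabs_right (/ _)) by (left; apply Rinv_0_lt_compat; nra).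
    replace (C / (m * m) * dist p0 p) with (C * dist p0 p * / (m * m)) by (unfold Rdiv; ring).
    apply Rmult_le_compat; [apply Rabs_pos | left; apply Rinv_0_lt_compat; nra | exact F_L|].
    apply Rinv_le_contravar; [nra | apply Rmult_le_compat; lra].
Qed.

Lemma bounded_lipschitz_RInt_0 F : bounded_lipschitz F ->
  (forall e p, adm e p -> forall x, continuous (F e p) x) ->
  bounded_lipschitz (fun e p x => RInt (F e p) 0 x).
Proof.
  intros [B [C [HC H]]] Hcont. exists B, C. split; [exact HC|].
  intros e p0 p Hp0 Hp x Hx. pose proof (dist_ge0 p0 p).
  assert (I0 : ex_RInt (F e p0) 0 x) by (apply ex_RInt_cont; auto).
  assert (I1 : ex_RInt (F e p) 0 x) by (apply ex_RInt_cont; auto).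
  split.
  - eapply Rle_trans;
      [apply abs_RInt_le_const; [lra | exact I1 | intros t Ht; apply (H e p p); auto; lra]|].
    destruct (H e p p Hp Hp 0 ltac:(lra)) as [HB _].
    pose proof (Rabs_pos (F e p 0)). nra.
  - rewrite <- (RInt_Rminus (F e p0) (F e p)) by assumption.
    eapply Rle_trans; [apply abs_RInt_le_const; [lra
      | apply (ex_RInt_minus (V := R_CompleteNormedModule)); assumption
      | intros t Ht; apply (H e p0 p); auto; lra]|].
    pose proof (Rmult_le_pos _ _ HC H0). nra.
Qed.

Lemma bounded_below_exp F : bounded_lipschitz F ->
  bounded_below (fun e p x => exp (F e p x)).
Proof.
  intros HF. destruct (bounded_lipschitz_bound F HF) as [B HB].
  exists (exp (- B)). split; [apply exp_pos|]. intros e p Hp x Hx.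
  specialize (HB e p Hp x Hx). apply Rabs_le_between in HB.
  apply exp_le_compat. lra.
Qed.

Lemma bounded_below_mul F G : bounded_below F -> bounded_below G ->
  bounded_below (fun e p x => F e p x * G e p x).
Proof.
  intros [m1 [H1 L1]] [m2 [H2 L2]]. exists (m1 * m2). split; [nra|].
  intros e p Hp x Hx. specialize (L1 e p Hp x Hx). specialize (L2 e p Hp x Hx).
  apply Rmult_le_compat; lra.
Qed.

Lemma bounded_below_inv F : bounded_lipschitz F -> bounded_below F ->
  bounded_below (fun e p x => / F e p x).
Proof.
  intros HF [m [Hm L]]. destruct (bounded_lipschitz_bound F HF) as [B HB].
  exists (/ (Rabs B + 1)). split; [apply Rinv_0_lt_compat; pose proof (Rabs_pos B); lra|].
  intros e p Hp x Hx. specialize (L e p Hp x Hx). specialize (HB e p Hp x Hx).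
  apply Rabs_le_between in HB. pose proof (RRle_abs B).
  apply Rinv_le_contravar; lra.
Qed.

End BoundedLipschitz.

Definition L2dist (b0 b : R -> R) : R := sqrt (L2sq b0 b).

Lemma L2dist_ge0 b0 b : 0 <= L2dist b0 b.
Proof. apply sqrt_pos. Qed.

Lemma L2dist_sq b0 b : (forall x, continuous b0 x) -> (forall x, continuous b x) ->
  L2dist b0 b ^ 2 = L2sq b0 b.
Proof.
  intros H0 H1. unfold L2dist. apply pow2_sqrt. unfold L2sq.
  assert (Hc : forall x, continuous (fun y => (b0 y - b y) ^ 2) x)
    by (intros; apply continuous_Rsqr, continuous_Rminus; auto).
  rewrite Rint_cont by exact Hc.
  apply RInt_ge_0; [lra | now apply ex_RInt_cont | intros; apply pow2_ge_0].
Qed.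

Definition scale_density (sigma b : R -> R) (y : R) : R := exp (- Ib sigma b y).

Definition scale_function (sigma b : R -> R) (x : R) : R := RInt (scale_density sigma b) 0 x.

Section InvariantDensity.

Variables K sigmaL sigmaU : R.
Hypothesis sigmaL_pos : 0 < sigmaL.
Hypothesis sigmaL_le_sigmaU : sigmaL <= sigmaU.

Definition admissible (sigma b : R -> R) : Prop :=
  (forall x, sigmaL <= sigma x <= sigmaU) /\ (forall x, continuous sigma x) /\
  (forall x, continuous b x) /\
  (forall x, 0 <= x <= 1 -> Rabs (b x) <= K).

Local Notation BL := (bounded_lipschitz admissible L2dist).
Local Notation BB := (bounded_below admissible).

Lemma admissible_inv_sq sigma b x : admissible sigma b ->
  0 < / sigma x ^ 2 <= / sigmaL ^ 2.
Proof.
  intros [Hs _]. specialize (Hs x). split.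
  - apply Rinv_0_lt_compat. nra.
  - apply Rinv_le_contravar; [nra | apply pow_incr; lra].
Qed.

Lemma continuous_drift_ratio sigma b : admissible sigma b ->
  forall y, continuous (fun y => 2 * b y / sigma y ^ 2) y.
Proof.
  intros Hadm y. pose proof Hadm as [Hs [Hsc [Hbc _]]]. specialize (Hs y).
  apply continuous_Rdiv; [apply continuous_Rmult; [apply continuous_const | auto]
    | apply continuous_Rsqr; auto | apply pow_nonzero; lra].
Qed.

Lemma Ib_RInt sigma b x : admissible sigma b ->
  Ib sigma b x = RInt (fun y => 2 * b y / sigma y ^ 2) 0 x.
Proof. intros Hadm. unfold Ib. apply Rint_cont. now apply continuous_drift_ratio. Qed.

Lemma continuous_Ib sigma b : admissible sigma b -> forall x, continuous (Ib sigma b) x.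
Proof.
  intros Hadm x. apply (continuous_ext (fun t => RInt (fun y => 2 * b y / sigma y ^ 2) 0 t)).
  - intros t. symmetry. now apply Ib_RInt.
  - apply continuous_RInt_0. now apply continuous_drift_ratio.
Qed.

Lemma bounded_lipschitz_Ib : BL Ib.
Proof.
  exists (2 * K / sigmaL ^ 2), (2 / sigmaL ^ 2).
  assert (Hs2 : 0 < / sigmaL ^ 2) by (apply Rinv_0_lt_compat; nra).
  split; [unfold Rdiv; nra|]. intros sigma b0 b H0 H1 x Hx.
  pose proof (continuous_drift_ratio _ _ H0) as C0.
  pose proof (continuous_drift_ratio _ _ H1) as C1.
  pose proof H0 as [_ [_ [Hb0 _]]]. pose proof H1 as [_ [_ [Hb HK]]].
  rewrite !Ib_RInt by assumption. split.
  - eapply Rle_trans; [apply (abs_RInt_0_le _ (fun _ => 2 * K / sigmaL ^ 2)); auto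
      using continuous_const|].
    + intros y Hy. destruct (admissible_inv_sq _ _ y H1). specialize (HK y Hy).
      unfold Rdiv. rewrite !Rabs_mult, Rabs_right, (Rabs_right (/ _)) by lra.
      pose proof (Rabs_pos (b y)). apply Rmult_le_compat; nra.
    + rewrite RInt_const_R. lra.
  - rewrite <- RInt_Rminus by (apply ex_RInt_cont; assumption).
    eapply Rle_trans;
      [apply (abs_RInt_0_le _ (fun y => 2 / sigmaL ^ 2 * Rabs (b0 y - b y))); auto|].
    + intros. apply continuous_Rminus; auto.
    + intros. apply continuous_Rmult; [apply continuous_const|].
      apply continuous_Rabs_comp, continuous_Rminus; auto.
    + intros y Hy. destruct (admissible_inv_sq _ _ y H1).
      replace (2 * b0 y / sigma y ^ 2 - 2 * b y / sigma y ^ 2)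
        with (2 * / sigma y ^ 2 * (b0 y - b y)) by (unfold Rdiv; ring).
      rewrite Rabs_mult, (Rabs_right (2 * _)) by lra.
      apply Rmult_le_compat_r; [apply Rabs_pos | unfold Rdiv; lra].
    + rewrite RInt_Rmult_l by (apply ex_RInt_cont; intros;
        apply continuous_Rabs_comp, continuous_Rminus; auto).
      apply Rmult_le_compat_l; [unfold Rdiv; lra|].
      unfold L2dist, L2sq. rewrite Rint_cont
        by (intros; apply continuous_Rsqr, continuous_Rminus; auto).
      apply RInt_abs_le_sqrt_RInt_sq. intros; apply continuous_Rminus; auto.
Qed.

Lemma continuous_scale_density sigma b : admissible sigma b ->
  forall y, continuous (scale_density sigma b) y.
Proof.
  intros Hadm y. apply continuous_exp_comp, continuous_Ropp. now apply continuous_Ib.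
Qed.

Lemma bounded_lipschitz_scale_density : BL scale_density.
Proof. apply bounded_lipschitz_exp, bounded_lipschitz_opp, bounded_lipschitz_Ib. Qed.

Lemma bounded_lipschitz_scale_function : BL scale_function.
Proof.
  apply (bounded_lipschitz_RInt_0 _ _ L2dist_ge0);
    [apply bounded_lipschitz_scale_density | apply continuous_scale_density].
Qed.

Lemma pi_un_scale sigma b x : admissible sigma b ->
  pi_un sigma b x = exp (Ib sigma b x) / sigma x ^ 2 *
    (exp (Ib sigma b 1) * (scale_function sigma b 1 - scale_function sigma b x)
     + scale_function sigma b x).
Proof.
  intros Hadm. pose proof (continuous_scale_density _ _ Hadm) as Hc.
  unfold pi_un, scale_function.
  change (fun y => exp (- Ib sigma b y)) with (scale_density sigma b).
  rewrite !Rint_cont by exact Hc.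
  rewrite <- (RInt_Chasles_R _ 0 x 1) by (apply ex_RInt_cont; exact Hc).
  ring.
Qed.

Lemma continuous_pi_un sigma b : admissible sigma b -> forall x, continuous (pi_un sigma b) x.
Proof.
  intros Hadm x. pose proof Hadm as [Hs [Hsc _]]. specialize (Hs x).
  pose proof (continuous_RInt_0 _ (continuous_scale_density _ _ Hadm)) as Hsf.
  apply (continuous_ext _ _ x (fun t => eq_sym (pi_un_scale sigma b t Hadm))).
  apply continuous_Rmult.
  - apply continuous_Rdiv; [apply continuous_exp_comp; now apply continuous_Ib
      | apply continuous_Rsqr; auto | apply pow_nonzero; lra].
  - apply continuous_Rplus; [apply continuous_Rmult; [apply continuous_const|] | apply Hsf].
    apply continuous_Rminus; [apply continuous_const | apply Hsf].
Qed.

Lemma bounded_lipschitz_inv_sigma_sq : BL (fun sigma _ x => / sigma x ^ 2).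
Proof.
  exists (/ sigmaL ^ 2), 0. split; [lra|]. intros sigma b0 b _ H1 x _.
  destruct (admissible_inv_sq _ _ x H1). split.
  - rewrite Rabs_right; lra.
  - rewrite Rminus_diag, Rabs_R0, Rmult_0_l. lra.
Qed.

Lemma bounded_lipschitz_pi_un : BL pi_un.
Proof.
  pose proof bounded_lipschitz_scale_function as Hsf.
  pose proof bounded_lipschitz_Ib as HI.
  eapply bounded_lipschitz_ext; [|intros sigma b Hadm x _; now apply pi_un_scale].
  apply (bounded_lipschitz_mul _ _ L2dist_ge0).
  - apply (bounded_lipschitz_mul _ _ L2dist_ge0); [now apply bounded_lipschitz_exp|].
    exact bounded_lipschitz_inv_sigma_sq.
  - apply bounded_lipschitz_add; [|exact Hsf].
    apply (bounded_lipschitz_mul _ _ L2dist_ge0).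
    + apply bounded_lipschitz_exp, bounded_lipschitz_eval; [lra | exact HI].
    + apply bounded_lipschitz_add;
        [apply bounded_lipschitz_eval; [lra | exact Hsf] | now apply bounded_lipschitz_opp].
Qed.

Lemma bounded_below_pi_un : BB pi_un.
Proof.
  destruct (bounded_below_exp _ _ _ bounded_lipschitz_Ib) as [me [Hme Lexp]].
  destruct (bounded_below_exp _ _ _ (bounded_lipschitz_opp _ _ _ bounded_lipschitz_Ib))
    as [ms [Hms Lsd]].
  exists (me * / sigmaU ^ 2 * (Rmin me 1 * ms)).
  assert (HS : 0 < / sigmaU ^ 2) by (apply Rinv_0_lt_compat; nra).
  assert (Hmin : 0 < Rmin me 1) by (apply Rmin_pos; lra).
  split; [apply Rmult_lt_0_compat; nra|]. intros sigma b Hadm x Hx.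
  pose proof (continuous_scale_density _ _ Hadm) as Hc.
  assert (Hsd : forall y, 0 <= y <= 1 -> ms <= scale_density sigma b y) by now apply Lsd.
  assert (Hpart : 0 <= scale_function sigma b x <= scale_function sigma b 1).
  { unfold scale_function.
    rewrite <- (RInt_Chasles_R _ 0 x 1) by (apply ex_RInt_cont; exact Hc).
    assert (Hnonneg : forall a c, 0 <= a -> a <= c -> c <= 1 ->
      0 <= RInt (scale_density sigma b) a c).
    { intros a c Ha Hac Hc1. apply RInt_ge_0; [lra | now apply ex_RInt_cont | intros y Hy].
      pose proof (Hsd y ltac:(lra)). lra. }
    pose proof (Hnonneg 0 x). pose proof (Hnonneg x 1). lra. }
  assert (Htotal : ms <= scale_function sigma b 1).
  { unfold scale_function.
    apply Rle_trans with (RInt (fun _ => ms) 0 1); [rewrite RInt_const_R; lra|].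
    apply RInt_le; [lra | apply ex_RInt_const | now apply ex_RInt_cont
      | intros y Hy; apply Hsd; lra]. }
  rewrite pi_un_scale by exact Hadm.
  pose proof (Lexp sigma b Hadm x Hx). pose proof (Lexp sigma b Hadm 1 ltac:(lra)).
  destruct (admissible_inv_sq _ _ x Hadm). pose proof Hadm as [Hs _]. specialize (Hs x).
  assert (/ sigmaU ^ 2 <= / sigma x ^ 2)
    by (apply Rinv_le_contravar; [nra | apply pow_incr; lra]).
  pose proof (Rmin_l me 1). pose proof (Rmin_r me 1).
  (* e1 (F1 - Fx) + Fx >= min(e1, 1) F1 since 0 <= Fx <= F1 *)
  assert (Rmin me 1 * ms <=
    exp (Ib sigma b 1) * (scale_function sigma b 1 - scale_function sigma b x)
    + scale_function sigma b x) by nra.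
  unfold Rdiv. apply Rmult_le_compat; [nra | nra | apply Rmult_le_compat; lra | lra].
Qed.

Lemma Hb_RInt sigma b : admissible sigma b -> Hb sigma b = RInt (pi_un sigma b) 0 1.
Proof. intros Hadm. apply Rint_cont. now apply continuous_pi_un. Qed.

Lemma bounded_lipschitz_Hb : BL (fun sigma b _ => Hb sigma b).
Proof.
  eapply bounded_lipschitz_ext; [|intros sigma b Hadm x _; now apply Hb_RInt].
  apply (bounded_lipschitz_eval _ _ (fun sigma b x => RInt (pi_un sigma b) 0 x)); [lra|].
  apply (bounded_lipschitz_RInt_0 _ _ L2dist_ge0);
    [exact bounded_lipschitz_pi_un | exact continuous_pi_un].
Qed.

Lemma bounded_below_Hb : BB (fun sigma b _ => Hb sigma b).
Proof.
  destruct bounded_below_pi_un as [m [Hm L]]. exists m. split; [exact Hm|].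
  intros sigma b Hadm _ _. rewrite Hb_RInt by exact Hadm.
  apply Rle_trans with (RInt (fun _ => m) 0 1); [rewrite RInt_const_R; lra|].
  apply RInt_le; [lra | apply ex_RInt_const | apply ex_RInt_cont; now apply continuous_pi_un
    | intros y Hy; apply L; [exact Hadm | lra]].
Qed.

Lemma bounded_lipschitz_pib : BL pib.
Proof.
  apply (bounded_lipschitz_mul _ _ L2dist_ge0); [exact bounded_lipschitz_pi_un|].
  apply (bounded_lipschitz_inv _ _ L2dist_ge0);
    [exact bounded_lipschitz_Hb | exact bounded_below_Hb].
Qed.

Lemma bounded_below_pib : BB pib.
Proof.
  apply bounded_below_mul; [exact bounded_below_pi_un|].
  apply (bounded_below_inv _ L2dist); [exact bounded_lipschitz_Hb | exact bounded_below_Hb].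
Qed.

Lemma continuous_pib sigma b : admissible sigma b -> forall x, continuous (pib sigma b) x.
Proof.
  intros Hadm x. apply continuous_Rmult; [now apply continuous_pi_un | apply continuous_const].
Qed.

Lemma Rint_pib sigma b : admissible sigma b -> Rint (pib sigma b) 0 1 = 1.
Proof.
  intros Hadm. destruct bounded_below_Hb as [m [Hm L]]. specialize (L sigma b Hadm 0 ltac:(lra)).
  rewrite Rint_cont by now apply continuous_pib. unfold pib.
  rewrite (RInt_ext _ (fun x => / Hb sigma b * pi_un sigma b x)) by (intros; apply Rmult_comm).
  rewrite RInt_Rmult_l, <- Hb_RInt by (try apply ex_RInt_cont; now try apply continuous_pi_un).
  apply Rinv_l. lra.
Qed.

Lemma divergences_le_L2sq : exists C, 0 < C /\ forall sigma b0 b,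
  admissible sigma b0 -> admissible sigma b ->
  Rmax (KL (pib sigma b0) (pib sigma b)) (Elog2 (pib sigma b0) (pib sigma b))
    <= C * L2sq b0 b.
Proof.
  destruct bounded_lipschitz_pib as [? [L [HL Hpib]]].
  destruct bounded_below_pib as [m [Hm Lpib]].
  exists (L ^ 2 / m + (L / m) ^ 2 + 1). split.
  { assert (0 <= L ^ 2 / m) by (apply Rdiv_le_0_compat; [apply pow2_ge_0 | lra]).
    pose proof (pow2_ge_0 (L / m)). lra. }
  intros sigma b0 b H0 H1.
  pose proof (continuous_pib _ _ H0) as C0. pose proof (continuous_pib _ _ H1) as C1.
  assert (Hclose : forall x, 0 <= x <= 1 ->
    Rabs (pib sigma b0 x - pib sigma b x) <= L * L2dist b0 b) by (intros; now apply Hpib).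
  assert (Hd : L2dist b0 b ^ 2 = L2sq b0 b) by (apply L2dist_sq; apply H0 || apply H1).
  assert (HKL : KL (pib sigma b0) (pib sigma b) <= L ^ 2 / m * L2sq b0 b).
  { rewrite <- Hd. replace (L ^ 2 / m * L2dist b0 b ^ 2) with ((L * L2dist b0 b) ^ 2 / m)
      by (field; lra).
    apply KL_le; auto. now rewrite !Rint_pib. }
  assert (HE : Elog2 (pib sigma b0) (pib sigma b) <= (L / m) ^ 2 * L2sq b0 b).
  { rewrite <- Hd. replace ((L / m) ^ 2 * L2dist b0 b ^ 2) with ((L * L2dist b0 b / m) ^ 2)
      by (field; lra).
    apply Elog2_le; auto. now apply Rint_pib. }
  assert (0 <= L ^ 2 / m) by (apply Rdiv_le_0_compat; [apply pow2_ge_0 | lra]).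
  pose proof (pow2_ge_0 (L / m)). pose proof (pow2_ge_0 (L2dist b0 b)).
  apply Rmax_lub; nra.
Qed.

End InvariantDensity.

Lemma continuous_of_derivable (f f' : R -> R) :
  (forall x, derivable_pt_lim f x (f' x)) -> forall x, continuous f x.
Proof. intros Hf x. apply (ex_derive_continuous f). exists (f' x). now apply is_derive_Reals. Qed.

Lemma admissible_of_Theta K0 sigmaL sigmaU sigma b :
  C2per sigma -> (forall x, sigmaL <= sigma x <= sigmaU) -> Theta K0 b ->
  admissible K0 sigmaL sigmaU sigma b.
Proof.
  intros [_ [s' [_ [Hs' _]]]] Hsigma [_ [b' [Hb' [_ [M1 [M2 [HM1 [HM2 HM]]]]]]]].
  split; [exact Hsigma|]. split; [exact (continuous_of_derivable _ _ Hs')|].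
  split; [exact (continuous_of_derivable _ _ Hb')|].
  intros x Hx. specialize (HM1 x Hx). specialize (HM2 0 ltac:(lra)).
  pose proof (Rabs_pos (b' 0)). lra.
Qed.

Theorem mainTheorem18 (K0 sigmaL sigmaU : R) :
  0 < sigmaL -> sigmaL <= sigmaU ->
  exists A : R, 0 < A /\
    forall sigma : R -> R,
      C2per sigma ->
      (forall x, sigmaL <= sigma x <= sigmaU) ->
      forall b0 b : R -> R, Theta K0 b0 -> Theta K0 b ->
        A ^ 2 * Rmax (KL (pib sigma b0) (pib sigma b))
                     (Elog2 (pib sigma b0) (pib sigma b))
        <= L2sq b0 b.
Proof.
  intros HsL HsU.
  destruct (divergences_le_L2sq K0 sigmaL sigmaU HsL HsU) as [C [HC Hdiv]].
  exists (/ sqrt C). split; [apply Rinv_0_lt_compat, sqrt_lt_R0, HC|].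
  intros sigma Hsigma Hbounds b0 b Hb0 Hb.
  rewrite pow_inv, pow2_sqrt by lra.
  apply Rle_trans with (/ C * (C * L2sq b0 b)).
  - apply Rmult_le_compat_l; [left; now apply Rinv_0_lt_compat|].
    apply Hdiv; now apply (admissible_of_Theta K0 sigmaL sigmaU).
  - right. field. lra.
Qed.
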